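(* Let $R$ be a differential field of characteristic zero, let $\ell_0,r_0\in R$, and define $\ell_{j+1}=\ell_j'+r_j+\ell_0\ell_j$, $r_{j+1}=r_j'+r_0\ell_j$ for $j\ge0$. Suppose there is $p>0$ with $\ell_p\neq0$, $\ell_{p-1}\neq0$ and $$\frac{r_p}{\ell_p}=\frac{r_{p-1}}{\ell_{p-1}}=:\alpha .$$ Let $K$ be a differential field extension of $R$ containing nonzero elements $u,v$ with $u'=\alpha u$, $v'=\ell_0v$, and an element $\beta$ with $\beta'=u^2v$. Then every solution $y\in K$ of $y''=\ell_0y'+r_0y$ is of the form $y=u^{-1}(c_2+c_1\beta)$ for some constants $c_1,c_2$ of $K$.
   Context: Successive differentiation of $y''=\ell_0y'+r_0y$ gives $y^{(j+2)}=\ell_jy'+r_jy$ with $\ell_j,r_j$ defined by the stated recurrence. *)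

From HB Require Import structures.
From mathcomp Require Import all_boot all_order all_algebra.
Set Implicit Arguments. Unset Strict Implicit. Unset Printing Implicit Defensive.
Import Order.TTheory GRing.Theory Num.Theory.
Local Open Scope ring_scope.

Definition is_derivation (F : fieldType) (d : F -> F) : Prop :=
  (forall x y, d (x + y) = d x + d y) /\
  (forall x y, d (x * y) = d x * y + x * d y).

Fixpoint lr (F : fieldType) (d : F -> F) (l0 r0 : F) (j : nat) : F * F :=
  match j with
  | O => (l0, r0)
  | S j' => let '(l, r) := lr d l0 r0 j' in (d l + r + l0 * l, d r + r0 * l)
  end.

Definition ell (F : fieldType) (d : F -> F) (l0 r0 : F) (j : nat) : F :=
  (lr d l0 r0 j).1.
Definition rr (F : fieldType) (d : F -> F) (l0 r0 : F) (j : nat) : F :=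
  (lr d l0 r0 j).2.

From HB Require Import structures.
From mathcomp Require Import all_boot all_order all_algebra.
From mathcomp Require Import ring.
Set Implicit Arguments. Unset Strict Implicit. Unset Printing Implicit Defensive.
Import GRing.Theory.
Local Open Scope ring_scope.

(* Let y be a solution of y'' = l_0 y' + r_0 y and write L_j, R_j
   for the images of l_j, r_j in K.  Differentiating repeatedly gives
   y^(j+2) = L_j y' + R_j y.  The hypothesis r_p / l_p = r_{p-1} / l_{p-1} = a
   turns the cases j = p-1 and j = p into y^(p+1) = L_{p-1} w and
   y^(p+2) = L_p w for the single quantity w = y' + a y; since the recurrence
   gives L_p = L_{p-1}' + (a + l_0) L_{p-1}, comparing the derivative of the
   first identity with the second yields the first-order equation
   w' = (a + l_0) w.  As u v satisfies the same equation, c_1 = w / (u v) is a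
   constant, and c_2 = u y - c_1 beta is one too because beta' = u^2 v; solving
   for y gives y = u^-1 (c_2 + c_1 beta). *)

Section DerivationFacts.
Variables (F : fieldType) (d : F -> F).
Hypothesis derivation_d : is_derivation d.

Lemma der0 : d 0 = 0.
Proof.
have h := derivation_d.1 0 0; rewrite addr0 in h.
by apply: (addrI (d 0)); rewrite addr0 -h.
Qed.

Lemma der1 : d 1 = 0.
Proof.
have h := derivation_d.2 1 1; rewrite !mulr1 !mul1r in h.
by apply: (addrI (d 1)); rewrite addr0 -h.
Qed.

Lemma derB x y : d (x - y) = d x - d y.
Proof.
have h := derivation_d.1 y (- y); rewrite subrr der0 in h.
have dN : d (- y) = - d y by apply/eqP; rewrite -addr_eq0 addrC -h.
by rewrite derivation_d.1 dN.
Qed.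

Lemma derV x : x != 0 -> d x^-1 = - (d x / x ^+ 2).
Proof.
move=> x_neq0.
have h := derivation_d.2 x x^-1; rewrite mulfV // der1 in h.
have e : x * d x^-1 = - (d x * x^-1) by apply/eqP; rewrite -addr_eq0 addrC -h.
have -> : d x^-1 = x^-1 * (x * d x^-1) by field.
by rewrite e; field.
Qed.

Lemma ratio_same_logderiv_const b w z :
  z != 0 -> d w = b * w -> d z = b * z -> d (w / z) = 0.
Proof.
move=> z_neq0 dw dz.
by rewrite derivation_d.2 derV // dw dz; field.
Qed.

End DerivationFacts.

Lemma ell_succ (F : fieldType) (d : F -> F) l0 r0 j :
  ell d l0 r0 j.+1 = d (ell d l0 r0 j) + rr d l0 r0 j + l0 * ell d l0 r0 j.
Proof. by rewrite /ell /rr /=; case: (lr d l0 r0 j). Qed.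

Lemma rr_succ (F : fieldType) (d : F -> F) l0 r0 j :
  rr d l0 r0 j.+1 = d (rr d l0 r0 j) + r0 * ell d l0 r0 j.
Proof. by rewrite /ell /rr /=; case: (lr d l0 r0 j). Qed.

Section HigherDerivatives.
Variables (R K : fieldType) (dR : R -> R) (dK : K -> K) (f : {rmorphism R -> K}).
Hypothesis derivation_dK : is_derivation dK.
Hypothesis f_commutes : forall x, f (dR x) = dK (f x).
Variables (l0 r0 : R) (y : K).
Hypothesis y_sol : dK (dK y) = f l0 * dK y + f r0 * y.

Let L j := f (ell dR l0 r0 j).
Let Rr j := f (rr dR l0 r0 j).

Lemma iter_der_solution j : iter j.+2 dK y = L j * dK y + Rr j * y.
Proof.
have [dD dM] := derivation_dK.
elim: j => [|j IH]; first by rewrite /= y_sol.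
rewrite iterS IH dD !dM y_sol /L /Rr ell_succ rr_succ.
by rewrite !rmorphD !rmorphM !f_commutes; ring.
Qed.

Lemma first_integral (q : nat) (a : K) :
  L q != 0 -> Rr q = a * L q -> Rr q.+1 = a * L q.+1 ->
  dK (dK y + a * y) = (a + f l0) * (dK y + a * y).
Proof.
move=> Lq_neq0 Rq Rq1; set w := dK y + a * y.
have [_ dM] := derivation_dK.
have der_q : iter q.+2 dK y = L q * w by rewrite iter_der_solution Rq /w; ring.
have der_q1 : iter q.+3 dK y = L q.+1 * w.
  by rewrite iter_der_solution Rq1 /w; ring.
have Lq1 : L q.+1 = dK (L q) + (a + f l0) * L q.
  rewrite /L ell_succ !rmorphD !rmorphM f_commutes -/(Rr q) Rq -/(L q); ring.
rewrite iterS der_q dM Lq1 in der_q1.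
apply: (mulfI Lq_neq0).
by apply: (addrI (dK (L q) * w)); rewrite der_q1; ring.
Qed.

End HigherDerivatives.

Section ReductionOfOrder.
Variables (K : fieldType) (d : K -> K).
Hypothesis derivation_d : is_derivation d.
Variables (a l u v beta y : K).
Hypotheses (u_neq0 : u != 0) (v_neq0 : v != 0).
Hypotheses (du : d u = a * u) (dv : d v = l * v) (dbeta : d beta = u ^+ 2 * v).

Lemma solution_from_first_integral :
  d (d y + a * y) = (a + l) * (d y + a * y) ->
  exists c1 c2 : K, d c1 = 0 /\ d c2 = 0 /\ y = u^-1 * (c2 + c1 * beta).
Proof.
set w := d y + a * y => dw.
have [_ dM] := derivation_d.
have uv_neq0 : u * v != 0 by rewrite mulf_neq0.
have duv : d (u * v) = (a + l) * (u * v) by rewrite dM du dv; ring.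
have dc1 : d (w / (u * v)) = 0.
  exact: (ratio_same_logderiv_const derivation_d uv_neq0 dw duv).
exists (w / (u * v)), (u * y - w / (u * v) * beta); split; first exact: dc1.
split; last by field; rewrite ?u_neq0 ?v_neq0.
by rewrite derB // dM dM dc1 dbeta du /w; field; rewrite ?u_neq0 ?v_neq0.
Qed.

End ReductionOfOrder.

Theorem mainTheorem6
  (R K : fieldType) (dR : R -> R) (dK : K -> K) (f : {rmorphism R -> K})
  (HdR : is_derivation dR) (HdK : is_derivation dK)
  (Hf : forall x, f (dR x) = dK (f x))
  (Hchar : [pchar R] =i pred0)
  (l0 r0 : R) (p : nat) (Hp : (0 < p)%N)
  (Hlp : ell dR l0 r0 p != 0) (Hlp1 : ell dR l0 r0 p.-1 != 0)
  (Heq : rr dR l0 r0 p / ell dR l0 r0 p = rr dR l0 r0 p.-1 / ell dR l0 r0 p.-1)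
  (u v beta : K) (Hu0 : u != 0) (Hv0 : v != 0)
  (Hu : dK u = f (rr dR l0 r0 p / ell dR l0 r0 p) * u)
  (Hv : dK v = f l0 * v)
  (Hbeta : dK beta = u ^+ 2 * v) :
  forall y : K, dK (dK y) = f l0 * dK y + f r0 * y ->
    exists c1 c2 : K, dK c1 = 0 /\ dK c2 = 0 /\ y = u^-1 * (c2 + c1 * beta).
Proof.
move=> y y_sol.
case: p Hp Hlp Hlp1 Heq Hu => [//|q] _ Hlp Hlp1 Heq Hu; rewrite /= in Hlp1 Heq.
set a := f (rr dR l0 r0 q.+1 / ell dR l0 r0 q.+1) in Hu.
have ratio_q1 : f (rr dR l0 r0 q.+1) = a * f (ell dR l0 r0 q.+1).
  by rewrite /a rmorphM fmorphV /= divfK ?fmorph_eq0.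
have ratio_q : f (rr dR l0 r0 q) = a * f (ell dR l0 r0 q).
  by rewrite /a Heq rmorphM fmorphV /= divfK ?fmorph_eq0.
apply: (solution_from_first_integral HdK Hu0 Hv0 Hu Hv Hbeta).
apply: (first_integral HdK Hf y_sol (q := q)) => //.
by rewrite fmorph_eq0.
Qed.
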